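(* If $L$ is a finite dimensional representation of $Y^{[p]}$, then the subspace $L^0=\{v\in L : e^{(r)}.v=0 \text{ for all } r>0\}$ is non-zero.
   Context: Let $k$ be an algebraically closed field of characteristic $p>2$, parities $|1|=0$, $|2|=1$. $Y=Y_{1|1}$ is the superalgebra over $k$ with generators $t_{i,j}^{(r)}$ ($1\le i,j\le2$, $r>0$, parity $|i|+|j|$) and relations $[t_{i,j}^{(r)},t_{k,l}^{(s)}]=(-1)^{|i||j|+|i||k|+|j||k|}\sum_{t=0}^{\min(r,s)-1}(t_{k,j}^{(t)}t_{i,l}^{(r+s-1-t)}-t_{k,j}^{(r+s-1-t)}t_{i,l}^{(t)})$, $t_{i,j}^{(0)}=\delta_{ij}$; $t_{i,j}(u)=\sum_{r\ge0}t_{i,j}^{(r)}u^{-r}$. The elements $d_i^{(r)},e^{(r)},f^{(r)}$ are the coefficients of $d_i(u)$, $e(u)=\sum_{r>0}e^{(r)}u^{-r}$, $f(u)$ defined by $t_{1,1}=d_1$, $t_{1,2}=d_1e$, $t_{2,1}=fd_1$, $t_{2,2}=fd_1e+d_2$. Let $b_1(u)=d_1(u)d_1(u-1)\cdots d_1(u-p+1)$, $b_2(u)=d_2(u)^{-1}\cdots d_2(u-p+1)^{-1}$ with coefficients $b_i^{(r)}$; the $b_i^{(rp)}$ are central and $Y^{[p]}=Y/YZ_p(Y)_+$, where $Z_p(Y)_+$ is the ideal generated by the $b_i^{(rp)}$ ($i=1,2,r>0$) in the subalgebra they generate. Images in $Y^{[p]}$ keep the same names. *)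

From HB Require Import structures.
From mathcomp Require Import all_boot all_order all_algebra.
Set Implicit Arguments. Unset Strict Implicit. Unset Printing Implicit Defensive.
Import GRing.Theory.
Local Open Scope ring_scope.

(* Formal power series in u^{-1} with coefficients in a (non-commutative)
   ring R: a series s represents  sum_{r>=0} s r * u^{-r}. *)
Section Series.
Variable R : pzRingType.
Definition series := nat -> R.

Definition sone : series := fun n => (n == 0%N)%:R.
Definition sadd (a b : series) : series := fun n => a n + b n.
Definition ssub (a b : series) : series := fun n => a n - b n.
Definition smul (a b : series) : series :=
  fun n => \sum_(m < n.+1) a m * b (n - m)%N.
Definition spow (a : series) (m : nat) : series := iter m (smul a) sone.
(* inverse of a series with constant term 1: (1 - x)^{-1} = sum_m x^m,
   where x = 1 - a has zero constant term, so only m <= n contributes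
   to the coefficient of u^{-n}. *)
Definition sinv (a : series) : series :=
  fun n => \sum_(m < n.+1) spow (ssub sone a) m n.
(* substitution u |-> u - c :  (u-c)^{-r} = sum_m C(r+m-1,m) c^m u^{-r-m} *)
Definition sshift (c : nat) (a : series) : series :=
  fun n => \sum_(r < n.+1) a r *+ ('C(n.-1, n - r) * c ^ (n - r))%N.
End Series.

(* indices 1,2 are encoded as the ordinals 0,1 of 'I_2; the parity |i| of an
   index i is then its value (|1| = 0, |2| = 1). *)
Definition sgn (R : pzRingType) (m : nat) : R := (-1) ^+ m.

Section Yangian.
Variable R : pzRingType.
(* T i j r is the image of t_{i,j}^{(r)} (only r > 0 is used) *)
Variable T : 'I_2 -> 'I_2 -> nat -> R.

Definition tser (i j : 'I_2) : series R :=
  fun r => if r == 0%N then (i == j)%:R else T i j r.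

Definition Y_rel : Prop :=
  forall (i j k l : 'I_2) (r s : nat), (0 < r)%N -> (0 < s)%N ->
    T i j r * T k l s - sgn R ((i + j) * (k + l))%N * (T k l s * T i j r) =
    sgn R (i * j + i * k + j * k)%N *
      \sum_(t < minn r s)
        (tser k j t * tser i l (r + s - 1 - t)%N
         - tser k j (r + s - 1 - t)%N * tser i l t).

Definition i1 : 'I_2 := ord0.
Definition i2 : 'I_2 := ord_max.

(* Gauss decomposition: t11 = d1, t12 = d1 e, t21 = f d1, t22 = f d1 e + d2 *)
Definition dser1 : series R := tser i1 i1.
Definition eser : series R := smul (sinv dser1) (tser i1 i2).
Definition fser : series R := smul (tser i2 i1) (sinv dser1).
Definition dser2 : series R :=
  ssub (tser i2 i2) (smul (smul fser dser1) eser).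

Definition bser1 (p : nat) : series R :=
  foldr (fun c acc => smul (sshift c dser1) acc) (sone R) (iota 0 p).
Definition bser2 (p : nat) : series R :=
  foldr (fun c acc => smul (sinv (sshift c dser2)) acc) (sone R) (iota 0 p).

Definition restricted (p : nat) : Prop :=
  forall r, (0 < r)%N -> bser1 p (r * p)%N = 0 /\ bser2 p (r * p)%N = 0.
End Yangian.

(* A finite dimensional representation of Y^{[p]} on the super vector space
   L = k^n (column vectors), whose standard basis vector b has parity par b:
   T i j r is the matrix of t_{i,j}^{(r)}, homogeneous of parity |i|+|j|,
   the defining relations of Y hold, and the b_i^{(rp)} (r>0) act by 0. *)
Definition Yp_rep (k : fieldType) (p n : nat) (par : 'I_n -> bool)
    (T : 'I_2 -> 'I_2 -> nat -> 'M[k]_n) : Prop :=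
  [/\ forall i j r a b, (0 < r)%N -> T i j r a b != 0 ->
        par a (+) par b = odd (i + j),
      Y_rel T
    & restricted T p].

(* Write t_{12}(u) = d_1(u) e(u).  The relations of Y between t_{11} and t_{12}
   give [d_1^(1), e^(s)] = e^(s), [d_1^(2), e^(m)] = e^(m+1) + d_1^(1) e^(m) for m > 0,
   and t_{12}^(1) t_{12}^(m) + t_{12}^(m) t_{12}^(1) = 0; by induction on r + s they force
   e^(r) e^(s) + e^(s) e^(r) = 0.  As 2 is invertible in k, the operators e^(r) on L
   anticommute pairwise and square to zero, so if v is a common null vector of
   e^(0), ..., e^(N-1), then v or e^(N) v is one of e^(0), ..., e^(N).  The common
   kernels of the first N operators decrease with N and, L being finite dimensional,
   are eventually constant. *)

From HB Require Import structures.
From mathcomp Require Import all_boot all_order all_algebra.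
From mathcomp Require Import zify.
From Stdlib Require Import Classical.
Import GRing.Theory.
Local Open Scope ring_scope.

Definition lie {R : pzRingType} (x y : R) := x * y - y * x.
Definition acomm {R : pzRingType} (x y : R) := x * y + y * x.

Section Brackets.
Context {R : pzRingType}.
Implicit Types x y z : R.

Lemma lieD x y z : lie x (y + z) = lie x y + lie x z.
Proof. by rewrite /lie mulrDr mulrDl opprD addrACA. Qed.

Lemma lieM x y z : lie x (y * z) = lie x y * z + y * lie x z.
Proof. by rewrite /lie mulrBl mulrBr !mulrA addrA subrK. Qed.
End Brackets.

Section SeriesAlgebra.
Context {R : nzRingType}.
Implicit Types (a b c : series R) (x : R).

Lemma eq_smul a a' b b' n :
    (forall i, (i <= n)%N -> a i = a' i) ->
    (forall i, (i <= n)%N -> b i = b' i) ->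
  smul a b n = smul a' b' n.
Proof.
move=> eq_a eq_b; apply: eq_bigr => i _.
have le_in : (i <= n)%N by rewrite -ltnS.
by rewrite eq_a // eq_b // leq_subr.
Qed.

Lemma smul_coef (p q : {poly R}) n :
  smul (fun i => p`_i) (fun i => q`_i) n = (p * q)`_n.
Proof. by rewrite coefM. Qed.

Lemma smulA a b c n : smul a (smul b c) n = smul (smul a b) c n.
Proof.
pose P s : {poly R} := \poly_(i < n.+1) s i.
have coefP s i : (i <= n)%N -> (P s)`_i = s i by rewrite coef_poly ltnS => ->.
have smulP s t i : (i <= n)%N -> smul s t i = (P s * P t)`_i.
  move=> le_in; rewrite -smul_coef.
  by apply: eq_smul => j le_ji; rewrite coefP // (leq_trans le_ji).
have -> : smul a (smul b c) n = smul (fun i => (P a)`_i) (fun i => (P b * P c)`_i) n.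
  by apply: eq_smul => i le_in; rewrite ?coefP ?smulP.
rewrite smul_coef mulrA -smul_coef.
by apply: eq_smul => i le_in; rewrite ?coefP ?smulP.
Qed.

Lemma smul1l b n : smul (sone R) b n = b n.
Proof.
rewrite /smul big_ord_recl /= subn0 /sone eqxx mul1r big1 ?addr0 // => i _.
by rewrite mul0r.
Qed.

Lemma smulS a b n : smul a b n.+1 = smul a (fun i => b i.+1) n + a n.+1 * b 0%N.
Proof.
rewrite /smul big_ord_recr /= subnn; congr (_ + _).
by apply: eq_bigr => i _; rewrite subSn // -ltnS.
Qed.

Lemma smul_rev a b n : smul a b n = \sum_(i < n.+1) a (n - i)%N * b i.
Proof.
rewrite /smul (reindex_inj rev_ord_inj) /=; apply: eq_bigr => i _.
by rewrite subSS subKn // -ltnS.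
Qed.

Lemma smulBr a b c n :
  smul a (fun i => b i - c i) n = smul a b n - smul a c n.
Proof. by rewrite /smul -sumrB; apply: eq_bigr => i _; rewrite mulrBr. Qed.

Lemma smul_mulr a b n x : smul a b n * x = smul a (fun i => b i * x) n.
Proof. by rewrite /smul mulr_suml; apply: eq_bigr => i _; rewrite mulrA. Qed.

Lemma smul_mull a b n x : (forall i, GRing.comm x (a i)) ->
  x * smul a b n = smul a (fun i => x * b i) n.
Proof.
by move=> xa; rewrite /smul mulr_sumr; apply: eq_bigr => i _; rewrite !mulrA xa.
Qed.

Lemma smul_lunit_last a b n : a 0%N = 1 -> (forall i, (i < n)%N -> b i = 0) ->
  smul a b n = b n.
Proof.
move=> a0 b_lt; rewrite smul_rev big_ord_recr /= subnn a0 mul1r big1 ?add0r //.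
by move=> i _; rewrite b_lt ?mulr0.
Qed.

Lemma smul_lunit_eq0 a b : a 0%N = 1 -> (forall n, smul a b n = 0) ->
  forall n, b n = 0.
Proof.
move=> a0 ab0 n; elim/ltn_ind: n => n IH.
by rewrite -(smul_lunit_last _ _ _ a0 IH) ab0.
Qed.

Lemma lie_smul x a b n : (forall i, GRing.comm x (a i)) ->
  lie x (smul a b n) = smul a (fun i => lie x (b i)) n.
Proof. by move=> xa; rewrite /lie smulBr smul_mull // smul_mulr. Qed.

Lemma smul_self_mul2n a n :
  smul a a n *+ 2 = \sum_(i < n.+1) acomm (a i) (a (n - i)%N).
Proof. by rewrite mulr2n {2}smul_rev -big_split. Qed.

Lemma spow_lt a m n : a 0%N = 0 -> (n < m)%N -> spow a m n = 0.
Proof.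
move=> a0; elim: m n => // m IH n lt_nm /=.
rewrite /smul big1 // => i _.
have [->|i_gt0] := posnP i; first by rewrite a0 mul0r.
by rewrite IH ?mulr0 //; have := ltn_ord i; lia.
Qed.

Lemma smulsV a n : a 0%N = 1 -> smul a (sinv a) n = sone R n.
Proof.
move=> a0; set y := ssub (sone R) a.
have y0 : y 0%N = 0 by rewrite /y /ssub /sone /= a0 subrr.
have -> : smul a (sinv a) n = \sum_(m < n.+1) smul a (spow y m) n.
  rewrite exchange_big /smul /sinv; apply: eq_bigr => i _; rewrite mulr_sumr.
  have le_ni : ((n - i).+1 <= n.+1)%N by rewrite ltnS leq_subr.
  rewrite (big_ord_widen _ (fun m => a i * spow y m (n - i)%N) le_ni).
  rewrite big_mkcond /=; apply: eq_bigr => m _.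
  by case: ifP => // lt_m; rewrite spow_lt ?mulr0 //; lia.
have spowS m : smul a (spow y m) n = spow y m n - spow y m.+1 n.
  rewrite -[spow y m n](smul1l _ n) [spow y m.+1 n]/= /smul -sumrB.
  by apply: eq_bigr => i _; rewrite -mulrBl /y /ssub opprB addrC subrK.
under eq_bigr => m _ do rewrite spowS.
rewrite -(big_mkord xpredT (fun m => spow y m n - spow y m.+1 n)).
rewrite (telescope_sumr_eq (fun m => - spow y m n)) //; last first.
  by move=> m _; rewrite opprK addrC.
by rewrite (spow_lt _ _ _ y0) // oppr0 sub0r opprK.
Qed.
End SeriesAlgebra.

(* [D], [X] and [e] stand for d_1(u) = t_{11}(u), t_{12}(u) and e(u). *)
Section AnticommutingE.
Context {R : nzRingType}.
Variables D X e : series R.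
Hypothesis D0 : D 0%N = 1.
Hypothesis e0 : e 0%N = 0.
Hypothesis XE : forall s, X s = smul D e s.
Hypothesis comm_D1 : forall s, GRing.comm (D 1%N) (D s).
Hypothesis comm_D2 : forall s, GRing.comm (D 2%N) (D s).
Hypothesis lie_D1X : forall s, (0 < s)%N -> lie (D 1%N) (X s) = X s.
Hypothesis lie_D2X : forall s, (0 < s)%N ->
  lie (D 2%N) (X s) = X s.+1 + D 1%N * X s - D s * X 1%N.
Hypothesis lie_DX1 : forall r, (0 < r)%N -> lie (D r) (X 1%N) = X r.
Hypothesis acomm_X1X : forall m, (0 < m)%N -> acomm (X 1%N) (X m) = 0.
Hypothesis mul2n_eq0 : forall x : R, x *+ 2 = 0 -> x = 0.

Lemma X0 : X 0%N = 0.
Proof. by rewrite XE /smul big_ord1 D0 e0 mulr0. Qed.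

Lemma X1E : X 1%N = e 1%N.
Proof. by rewrite XE smul_lunit_last // => i; rewrite ltnS leqn0 => /eqP->. Qed.

Lemma smul_D_shift t : smul D (fun m => e m.+1) t = X t.+1.
Proof. by rewrite XE smulS e0 mulr0 addr0. Qed.

Lemma lie_D1e s : lie (D 1%N) (e s) = e s.
Proof.
apply/eqP; rewrite -subr_eq0; apply/eqP; move: s.
apply: (smul_lunit_eq0 _ _ D0) => s.
rewrite smulBr -lie_smul // -XE.
have [->|s_gt0] := posnP s; last by rewrite lie_D1X ?subrr.
by rewrite X0 /lie mulr0 mul0r !subrr.
Qed.

Lemma mul_e_D1 s : e s * D 1%N = D 1%N * e s - e s.
Proof. by rewrite -[X in _ - X]lie_D1e opprB addrC subrK. Qed.

Lemma lie_D2e m : (0 < m)%N -> lie (D 2%N) (e m) = e m.+1 + D 1%N * e m.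
Proof.
pose G m := lie (D 2%N) (e m) - e m.+1 - D 1%N * e m.
have smulG t : smul D G t = lie (D 2%N) (X t) - X t.+1 - D 1%N * X t.
  rewrite /G smulBr (smulBr _ (fun i => lie _ (e i))) -lie_smul //.
  by rewrite smul_D_shift -smul_mull // -XE.
have G_succ0 : forall s, smul D (fun m => G m.+1) s = 0.
  move=> s; apply: (addIr (D s.+1 * G 0%N)); rewrite -smulS smulG lie_D2X //.
  rewrite /G /lie e0 X1E !mulr0 mul0r !subr0 sub0r mulrN.
  by rewrite addrAC (addrAC (X s.+2 + _)) addrK addrAC subrr.
case: m => // m _; have /eqP := smul_lunit_eq0 _ _ D0 G_succ0 m.
by rewrite /G subr_eq0 subr_eq addrC => /eqP.
Qed.

Lemma lie_De1 r : lie (D r) (e 1%N) = X r.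
Proof.
have [->|r_gt0] := posnP r; last by rewrite -X1E lie_DX1.
by rewrite D0 X0 /lie mul1r mulr1 subrr.
Qed.

Lemma lie_D2_mul_e r s : (0 < r)%N -> (0 < s)%N ->
  lie (D 2%N) (e r * e s) =
    e r.+1 * e s + e r * e s.+1 + (D 1%N * (e r * e s)) *+ 2 - e r * e s.
Proof.
move=> r_gt0 s_gt0; rewrite lieM !lie_D2e // mulrDl mulrDr !mulrA mul_e_D1.
by rewrite mulrBl -!mulrA mulr2n !addrA (addrAC _ (D 1%N * _) (e r * _)).
Qed.

Lemma lie_D2_acomm_e r s : (0 < r)%N -> (0 < s)%N ->
  lie (D 2%N) (acomm (e r) (e s)) = acomm (e r.+1) (e s) + acomm (e r) (e s.+1)
    + (D 1%N * acomm (e r) (e s)) *+ 2 - acomm (e r) (e s).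
Proof.
move=> r_gt0 s_gt0; rewrite lieD !lie_D2_mul_e //.
have regroup (a b d f a' b' d' f' : R) :
    (a + b + d *+ 2 - f) + (a' + b' + d' *+ 2 - f') =
    (a + b') + (b + a') + (d + d') *+ 2 - (f + f').
  by rewrite (addrC a' b') addrACA (addrACA (a + b)) (addrACA a) mulrnDl opprD.
by rewrite regroup -mulrDr.
Qed.

Lemma acomm_e_succ r s : (0 < r)%N -> (0 < s)%N -> acomm (e r) (e s) = 0 ->
  acomm (e r.+1) (e s) = - acomm (e r) (e s.+1).
Proof.
move=> r_gt0 s_gt0 ers0; have := lie_D2_acomm_e _ _ r_gt0 s_gt0.
rewrite ers0 /lie mulr0 mul0r subrr mulr0 mul0rn addr0 subr0 => /eqP.
by rewrite eq_sym addr_eq0 => /eqP.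
Qed.

Lemma mul_e1_D r : e 1%N * D r = D r * e 1%N - X r.
Proof. by rewrite -lie_De1 opprB addrC subrK. Qed.

Lemma smul_X_e n : smul X e n = smul D (smul e e) n.
Proof. by rewrite smulA; apply: eq_smul => // i _; rewrite XE. Qed.

Lemma smul_D_acomm_e1 m : (0 < m)%N ->
  smul D (fun j => acomm (e 1%N) (e j)) m = smul X e m.
Proof.
move=> m_gt0; apply/eqP; rewrite -subr_eq0; apply/eqP.
rewrite -(acomm_X1X _ m_gt0) X1E XE /smul /acomm -sumrB mulr_sumr mulr_suml -big_split.
apply: eq_bigr => j _.
by rewrite mulrA mul_e1_D mulrBl mulrDr !mulrA addrAC.
Qed.

Lemma acomm_e r s : acomm (e r) (e s) = 0.
Proof.
(* Induction on L = r + s: the relation between X^(1) and X^(L-1) settles the pair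
   (1, L - 1), and [acomm_e_succ] then moves along the line r + s = L. *)
move: {2}(r + s)%N (erefl (r + s)%N) => L; elim/ltn_ind: L r s => L IH r s rsL.
have ee0 N : (N < L)%N -> smul e e N = 0.
  move=> ltNL; apply: mul2n_eq0; rewrite smul_self_mul2n big1 // => i _.
  by apply: (IH N) => //; rewrite subnKC // -ltnS.
have acomm_e1 : acomm (e 1%N) (e L.-1) = 0.
  have [-> | predL_gt0] := posnP L.-1; first by rewrite /acomm e0 mulr0 mul0r addr0.
  rewrite -(smul_lunit_last _ (fun j => acomm (e 1%N) (e j)) _ D0) => [|i lt_iL];
    last first.
    by apply: (IH (1 + i)%N _ 1%N i erefl); lia.
  rewrite smul_D_acomm_e1 // smul_X_e; apply: big1 => i _.
  by rewrite ee0 ?mulr0 //; have := ltn_ord i; lia.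
have acomm_eL r' : (0 < r')%N -> (r' < L)%N -> acomm (e r') (e (L - r')%N) = 0.
  elim: r' => // r' IHr _ lt_r'L.
  have [-> | r'_gt0] := posnP r'; first by rewrite subn1.
  rewrite acomm_e_succ //; last by apply: (IH L.-1 _ r' (L - r'.+1)%N); lia.
  - have -> : (L - r'.+1).+1 = (L - r')%N by lia.
    by rewrite IHr ?oppr0 //; lia.
  - lia.
have [-> | r_gt0] := posnP r; first by rewrite /acomm e0 mulr0 mul0r addr0.
have [-> | s_gt0] := posnP s; first by rewrite /acomm e0 mulr0 mul0r addr0.
have -> : s = (L - r)%N by lia.
by apply: acomm_eL; lia.
Qed.
End AnticommutingE.

Section YangianRelations.
Context {R : nzRingType}.
Variable T : 'I_2 -> 'I_2 -> nat -> R.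
Hypothesis Yrel : Y_rel T.

Local Notation D := (tser T i1 i1).
Local Notation X := (tser T i1 i2).

Lemma Y_rel_tser (i j k l : 'I_2) {r s : nat} : (0 < r)%N -> (0 < s)%N ->
  tser T i j r * tser T k l s
    - sgn R ((i + j) * (k + l))%N * (tser T k l s * tser T i j r) =
  sgn R (i * j + i * k + j * k)%N *
    \sum_(t < minn r s) (tser T k j t * tser T i l (r + s - 1 - t)%N
                         - tser T k j (r + s - 1 - t)%N * tser T i l t).
Proof. by case: r => // r; case: s => // s; apply: Yrel. Qed.

Lemma tser11_0 : D 0%N = 1. Proof. by rewrite /tser eqxx. Qed.
Lemma tser12_0 : X 0%N = 0. Proof. by []. Qed.

Lemma comm_tser11_1 s : GRing.comm (D 1%N) (D s).
Proof.
have [->|s_gt0] := posnP s; first by rewrite /GRing.comm tser11_0 mul1r mulr1.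
have := Y_rel_tser i1 i1 i1 i1 (ltn0Sn 0) s_gt0.
rewrite (minn_idPl s_gt0) big_ord1 /sgn /= expr0 !mul1r.
by rewrite tser11_0 mulr1 subrr => /eqP; rewrite subr_eq0 => /eqP.
Qed.

Lemma comm_tser11_2 s : GRing.comm (D 2%N) (D s).
Proof.
have [->|s_gt0] := posnP s; first by rewrite /GRing.comm tser11_0 mul1r mulr1.
have [s_le1 | s_gt1] := leqP s 1.
  have -> : s = 1%N by lia.
  exact/esym/comm_tser11_1.
have := Y_rel_tser i1 i1 i1 i1 (ltn0Sn 1) s_gt0.
rewrite (minn_idPl s_gt1) /sgn /= expr0 !mul1r big_ord_recr big_ord1 /=.
rewrite tser11_0 mul1r mulr1 subrr add0r.
have -> : (2 + s - 1 - 1 = s)%N by lia.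
by rewrite comm_tser11_1 subrr => /eqP; rewrite subr_eq0 => /eqP.
Qed.

Lemma lie_tser11_1_tser12 s : (0 < s)%N -> lie (D 1%N) (X s) = X s.
Proof.
move=> s_gt0; have := Y_rel_tser i1 i1 i1 i2 (ltn0Sn 0) s_gt0.
rewrite (minn_idPl s_gt0) big_ord1 /sgn /= expr0 !mul1r add1n subn1 /=.
by rewrite subn0 tser12_0 mulr0 subr0.
Qed.

Lemma lie_tser11_2_tser12 s : (0 < s)%N ->
  lie (D 2%N) (X s) = X s.+1 + D 1%N * X s - D s * X 1%N.
Proof.
move=> s_gt0; have := Y_rel_tser i1 i1 i1 i2 (ltn0Sn 1) s_gt0.
rewrite /sgn /= expr0 !mul1r.
have [s_le1 | s_gt1] := leqP s 1.
  have -> : s = 1%N by lia.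
  rewrite (minn_idPr (leqnSn 1)) big_ord1 tser11_0 tser12_0 mul1r mulr0 subr0.
  by rewrite addrK => rel; exact: rel.
rewrite (minn_idPl s_gt1) big_ord_recr big_ord1 /= tser11_0 tser12_0.
rewrite mul1r mulr0 subr0 addrA.
have -> : (2 + s - 1 - 1 = s)%N by lia.
by move=> rel; exact: rel.
Qed.

Lemma lie_tser11_tser12_1 r : (0 < r)%N -> lie (D r) (X 1%N) = X r.
Proof.
move=> r_gt0; have := Y_rel_tser i1 i1 i1 i2 r_gt0 (ltn0Sn 0).
rewrite (minn_idPr r_gt0) big_ord1 /sgn /= expr0 !mul1r addnK subn0.
by rewrite mulr0 subr0.
Qed.

Lemma acomm_tser12_1 m : (0 < m)%N -> acomm (X 1%N) (X m) = 0.
Proof.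
move=> m_gt0; have := Y_rel_tser i1 i2 i1 i2 (ltn0Sn 0) m_gt0.
rewrite (minn_idPl m_gt0) big_ord1 /sgn /= expr0 expr1 mul1r mulN1r opprK.
by rewrite mulr0 mul0r subrr.
Qed.

Lemma tser12_eser s : X s = smul D (eser T) s.
Proof.
rewrite /eser smulA -[LHS]smul1l.
by apply: eq_smul => // i _; rewrite smulsV ?tser11_0.
Qed.

Lemma eser0 : eser T 0%N = 0.
Proof. by rewrite /eser /smul big_ord1 mulr0. Qed.

Lemma acomm_eser : (forall x : R, x *+ 2 = 0 -> x = 0) ->
  forall r s, acomm (eser T r) (eser T s) = 0.
Proof.
move=> mul2n_eq0; exact: (acomm_e _ _ _ tser11_0 eser0 tser12_eser
  comm_tser11_1 comm_tser11_2 lie_tser11_1_tser12 lie_tser11_2_tser12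
  lie_tser11_tser12_1 acomm_tser12_1 mul2n_eq0).
Qed.
End YangianRelations.

Lemma ex_argmin_nat (f : nat -> nat) : exists N, forall M, (f N <= f M)%N.
Proof.
apply: NNPP => no_min.
have descent N : exists M, (f M < f N)%N.
  apply: NNPP => no_lt; apply: no_min; exists N => M.
  by rewrite leqNgt; apply/negP => lt_MN; apply: no_lt; exists M.
suff no_value v N : f N = v -> False by exact: (no_value _ 0%N erefl).
elim/ltn_ind: v N => v IH N fN; have [M lt_MN] := descent N.
by apply: (IH (f M)) => //; rewrite -fN.
Qed.

Section CommonNullVector.
Context {F : fieldType} {m n : nat}.
Variable E : nat -> 'M[F]_(m, n).

Definition common_ker N := (\bigcap_(j < N) kermx (E j)^T)%MS.

Lemma sub_common_kerP p (w : 'M_(p, n)) N :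
  reflect (forall j, (j < N)%N -> w *m (E j)^T = 0) (w <= common_ker N)%MS.
Proof.
apply: (iffP sub_bigcapmxP) => [w_ker j lt_jN | w_ker j _].
  exact/sub_kermxP/(w_ker (Ordinal lt_jN)).
exact/sub_kermxP/w_ker.
Qed.

Lemma common_ker_anti N M : (N <= M)%N -> (common_ker M <= common_ker N)%MS.
Proof.
move=> le_NM; apply/sub_common_kerP => j lt_jN.
by apply/sub_common_kerP: (leq_trans lt_jN le_NM).
Qed.

Lemma null_trmx (v : 'cV_n) j : (v^T *m (E j)^T == 0) = (E j *m v == 0).
Proof. by rewrite -trmx_mul -trmx0 (inj_eq trmx_inj). Qed.

Lemma common_null_vector :
    (forall N, exists v : 'cV_n, v != 0 /\ forall j, (j < N)%N -> E j *m v = 0) ->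
  exists v : 'cV_n, v != 0 /\ forall j, E j *m v = 0.
Proof.
move=> finite_null; have [N min_rank] := ex_argmin_nat (fun N => \rank (common_ker N)).
have [v [v_neq0 v_null]] := finite_null N; exists v; split=> // j.
set M := maxn N j.+1; have le_NM : (N <= M)%N := leq_maxl _ _.
have ker_stable : (common_ker N <= common_ker M)%MS.
  rewrite -(mxrank_leqif_sup (common_ker_anti _ _ le_NM)).2 eqn_leq min_rank.
  by rewrite mxrankS ?common_ker_anti.
have /sub_common_kerP/(_ j (leq_maxr _ _))/eqP : (v^T <= common_ker M)%MS.
  apply: submx_trans ker_stable; apply/sub_common_kerP => i /v_null/eqP.
  by rewrite -null_trmx => /eqP.
by rewrite null_trmx => /eqP.
Qed.
End CommonNullVector.

Lemma anticomm_common_null_vector (F : fieldType) n (E : nat -> 'M[F]_n.+1) :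
    (forall r, E r *m E r = 0) -> (forall r s, E r *m E s = - (E s *m E r)) ->
  exists v : 'cV_n.+1, v != 0 /\ forall j, E j *m v = 0.
Proof.
move=> sqr0 anti; apply: common_null_vector; elim=> [|N [v [v_neq0 v_null]]].
  exists (const_mx 1); split=> //; apply/negP => /eqP/matrixP/(_ ord0 ord0).
  by rewrite !mxE; apply/eqP; rewrite oner_eq0.
have [EN_v0 | EN_v_neq0] := eqVneq (E N *m v) 0.
  by exists v; split=> // j; rewrite ltnS leq_eqVlt => /predU1P [-> | /v_null].
exists (E N *m v); split=> // j; rewrite ltnS leq_eqVlt => /predU1P [-> | lt_jN].
  by rewrite mulmxA sqr0 mul0mx.
by rewrite mulmxA anti mulNmx -mulmxA v_null // mulmx0 oppr0.
Qed.

Lemma mulr2n_eq0_pchar (F : fieldType) (V : lmodType F) p (v : V) :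
  p \in [pchar F] -> (2 < p)%N -> v *+ 2 = 0 -> v = 0.
Proof.
move=> charFp p_gt2; rewrite -scaler_nat => /eqP; rewrite scaler_eq0.
by rewrite -(dvdn_pcharf charFp) gtnNdvd //= => /eqP.
Qed.

Theorem lemma3p4 (k : closedFieldType) (p : nat) (hp : prime p)
    (hchar : p \in [pchar k]) (hp2 : (2 < p)%N)
    (n : nat) (hn : (0 < n)%N) (par : 'I_n -> bool)
    (T : 'I_2 -> 'I_2 -> nat -> 'M[k]_n) :
  Yp_rep p par T ->
  exists v : 'cV[k]_n, v != 0 /\
    forall r : nat, (0 < r)%N -> eser T r *m v = 0.
Proof.
case=> _ Yrel _; case: n hn par T Yrel => // n _ _ T Yrel.
have mul2n_eq0 (x : 'M[k]_n.+1) : x *+ 2 = 0 -> x = 0.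
  exact: mulr2n_eq0_pchar hchar hp2.
have acomm_e := acomm_eser _ Yrel mul2n_eq0.
have [|r s|v [v_neq0 v_null]] := @anticomm_common_null_vector _ _ (eser T).
- by move=> r; apply: mul2n_eq0; rewrite mulr2n; apply: acomm_e.
- by apply/eqP; rewrite -addr_eq0; apply/eqP; apply: acomm_e.
- by exists v; split=> // r _; apply: v_null.
Qed.
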